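(* Let $\mathcal K=\{\mathbf x\in\mathbb R^n : \mathbf k_i^T\mathbf x\ge 0,\ i=1,\dots,p\}$ be a polyhedral cone with non-empty topological interior, where each $\mathbf k_i$ has unit Euclidean length. Define linear programs as follows. Problem $P_0$: maximize $z$ over $(\mathbf x,z)\in\mathbb R^n\times\mathbb R$ subject to $\mathbf k_i^T\mathbf x\ge z$ for all $i$ and $-1\le x_i\le 1$ for all $i=1,\dots,n$. Given Problem $P_\ell$, let $(\mathbf x_\ell,z_\ell)$ be an (arbitrarily chosen) optimal solution of $P_\ell$, let $\mathbf u_\ell=\mathbf x_\ell/\|\mathbf x_\ell\|$, and let Problem $P_{\ell+1}$ be Problem $P_\ell$ with the additional constraint $\mathbf u_\ell^T\mathbf x\le 1$. Then for any $\ell\ge 0$ and any $r$ with $0\le r<\|\mathbf x_\ell-\mathbf u_\ell\|$, the ball $B_r(\mathbf x_\ell)$ is disjoint from the feasible set of Problem $P_{\ell+1}$, i.e. there is no feasible point $(\mathbf x,z)$ of $P_{\ell+1}$ with $\mathbf x\in B_r(\mathbf x_\ell)$.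
   Context: $B_r(\mathbf x)=\{\mathbf y\in\mathbb R^n:\|\mathbf x-\mathbf y\|\le r\}$ denotes the closed ball, with $\|\cdot\|$ the Euclidean norm. (For each $\ell$, problem $P_\ell$ has an optimal solution and $\|\mathbf x_\ell\|\ge 1$, so $\mathbf u_\ell$ is well defined.) *)

From mathcomp Require Import all_boot all_order all_algebra.
From mathcomp Require Export reals.
Set Implicit Arguments. Unset Strict Implicit. Unset Printing Implicit Defensive.
Import Order.TTheory GRing.Theory Num.Theory.
Local Open Scope ring_scope.

Section Defs.
Variable R : realType.

Definition dotv (n : nat) (x y : 'I_n -> R) : R := \sum_(i < n) x i * y i.
Definition enorm (n : nat) (x : 'I_n -> R) : R := Num.sqrt (dotv x x).

Definition unitdir (n : nat) (x : 'I_n -> R) : 'I_n -> R :=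
  fun i => x i / enorm x.

(* Feasible set of problem P_l, where xs m is the chosen optimal x-part of P_m:
   k_i^T x >= z for all i, -1 <= x_j <= 1 for all j, and
   u_m^T x <= 1 for every m < l, with u_m = xs m / ||xs m||. *)
Definition feasP (n p : nat) (k : 'I_p -> 'I_n -> R) (xs : nat -> 'I_n -> R)
  (l : nat) (x : 'I_n -> R) (z : R) : Prop :=
  (forall i : 'I_p, z <= dotv (k i) x) /\
  (forall j : 'I_n, -1 <= x j <= 1) /\
  (forall m : nat, (m < l)%N -> dotv (unitdir (xs m)) x <= 1).

Definition optP (n p : nat) (k : 'I_p -> 'I_n -> R) (xs : nat -> 'I_n -> R)
  (l : nat) (x : 'I_n -> R) (z : R) : Prop :=
  feasP k xs l x z /\ (forall (y : 'I_n -> R) (w : R), feasP k xs l y w -> w <= z).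

End Defs.

(** The optimal value of every [P_l] is positive: an interior point of the cone,
    scaled into the unit ball, is feasible with a positive [z].  Hence an optimal
    [x_l] has norm at least 1, for otherwise stretching [(x_l, z_l)] towards the
    unit sphere would keep it feasible and increase [z].  With [u_l = x_l/|x_l|],
    every [x] feasible for [P_(l+1)] satisfies [u_l.x <= 1] while [u_l.x_l = |x_l|], so
    by Cauchy-Schwarz [|x_l - x| >= u_l.(x_l - x) >= |x_l| - 1 = |x_l - u_l|]. *)
From mathcomp Require Import all_boot all_order all_algebra.
From mathcomp Require Import reals.
From mathcomp Require Import ring lra.
Set Implicit Arguments. Unset Strict Implicit. Unset Printing Implicit Defensive.
Import Order.TTheory GRing.Theory Num.Theory.
Local Open Scope ring_scope.

Section EuclideanSpace.
Variables (R : realType) (n : nat).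
Implicit Types (a b c x y : 'I_n -> R) (t : R).

Lemma eq_dotv a b a' b' : a =1 a' -> b =1 b' -> dotv a b = dotv a' b'.
Proof. by move=> eq_a eq_b; apply: eq_bigr => i _; rewrite eq_a eq_b. Qed.

Lemma eq_enorm a b : a =1 b -> enorm a = enorm b.
Proof. by move=> eq_ab; rewrite /enorm (eq_dotv eq_ab eq_ab). Qed.

Lemma dotvC a b : dotv a b = dotv b a.
Proof. by apply: eq_bigr => i _; rewrite mulrC. Qed.

Lemma dotvBr a b c : dotv a (fun j => b j - c j) = dotv a b - dotv a c.
Proof. by rewrite /dotv -sumrB; apply: eq_bigr => i _; rewrite mulrBr. Qed.

Lemma dotvBl a b c : dotv (fun j => a j - b j) c = dotv a c - dotv b c.
Proof. by rewrite dotvC dotvBr !(dotvC c). Qed.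

Lemma dotvZr a b t : dotv a (fun j => t * b j) = t * dotv a b.
Proof. by rewrite /dotv mulr_sumr; apply: eq_bigr => i _; rewrite mulrCA. Qed.

Lemma dotvZl a b t : dotv (fun j => t * a j) b = t * dotv a b.
Proof. by rewrite dotvC dotvZr dotvC. Qed.

Lemma dotvv_ge0 a : 0 <= dotv a a.
Proof. by apply: sumr_ge0 => i _; rewrite -expr2 sqr_ge0. Qed.

Lemma enorm_ge0 a : 0 <= enorm a.
Proof. exact: sqrtr_ge0. Qed.

Lemma sqr_enorm a : enorm a ^+ 2 = dotv a a.
Proof. by rewrite sqr_sqrtr ?dotvv_ge0. Qed.

Lemma enormZ a t : enorm (fun j => t * a j) = `|t| * enorm a.
Proof.
by rewrite /enorm dotvZr dotvZl mulrA -expr2 sqrtrM ?sqr_ge0 // sqrtr_sqr.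
Qed.

Lemma norm_coord_le_enorm a j : `|a j| <= enorm a.
Proof.
rewrite -sqrtr_sqr ler_sqrt ?dotvv_ge0 // /dotv (bigD1 j) //= -expr2 lerDl.
by apply: sumr_ge0 => i _; rewrite -expr2 sqr_ge0.
Qed.

Lemma dotv_unit_le_enorm a b : dotv a a = 1 -> dotv a b <= enorm b.
Proof.
move=> aa1; set ab := dotv a b.
have proj_ge0 := dotvv_ge0 (fun j => b j - ab * a j).
rewrite dotvBr !dotvBl !dotvZr !dotvZl aa1 (dotvC b a) -/ab in proj_ge0.
have : ab ^+ 2 <= dotv b b by lra.
rewrite -ler_sqrt ?dotvv_ge0 // sqrtr_sqr.
exact: le_trans (ler_norm ab).
Qed.

Lemma unitdirE x : unitdir x =1 (fun j => (enorm x)^-1 * x j).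
Proof. by move=> j; rewrite /unitdir mulrC. Qed.

(* For [x = 0] the junk value [0^-1 = 0] makes [unitdir x = 0]. *)
Lemma dotv_unitdir_le_enorm x b : dotv (unitdir x) b <= enorm b.
Proof.
have [x0|x_neq0] := eqVneq (enorm x) 0.
  by rewrite (eq_dotv (unitdirE x) (frefl b)) dotvZl x0 invr0 mul0r enorm_ge0.
apply: dotv_unit_le_enorm.
rewrite (eq_dotv (unitdirE x) (unitdirE x)) dotvZr dotvZl -sqr_enorm.
by field.
Qed.

Lemma dotv_unitdir_self x : dotv (unitdir x) x = enorm x.
Proof.
rewrite (eq_dotv (unitdirE x) (frefl x)) dotvZl -sqr_enorm.
have [->|x_neq0] := eqVneq (enorm x) 0; first by rewrite invr0 mul0r.
by field.
Qed.

Lemma enorm_sub_unitdir x :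
  1 <= enorm x -> enorm (fun j => x j - unitdir x j) = enorm x - 1.
Proof.
move=> x_ge1; have x_gt0 : 0 < enorm x by lra.
rewrite (@eq_enorm _ (fun j => (1 - (enorm x)^-1) * x j)); last first.
  by move=> j; rewrite /unitdir; ring.
rewrite enormZ ger0_norm ?subr_ge0 ?invf_le1 //.
by field; rewrite gt_eqF.
Qed.

Lemma enorm_sub_ge_cut x y :
  1 <= enorm x -> dotv (unitdir x) y <= 1 -> enorm x - 1 <= enorm (fun j => x j - y j).
Proof.
move=> x_ge1 cut.
have := dotv_unitdir_le_enorm x (fun j => x j - y j).
by rewrite dotvBr dotv_unitdir_self; lra.
Qed.

Lemma interior_halfspace_dotv a x0 e :
  enorm a = 1 -> 0 < e ->
  (forall y, enorm (fun j => y j - x0 j) < e -> 0 <= dotv a y) ->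
  e / 2 <= dotv a x0.
Proof.
move=> a1 e_gt0 ball_sub.
set y := fun j => x0 j - e / 2 * a j.
have y_in_ball : enorm (fun j => y j - x0 j) < e.
  rewrite (@eq_enorm _ (fun j => - (e / 2) * a j)); last by move=> j; rewrite /y; ring.
  by rewrite enormZ a1 mulr1 normrN ger0_norm; lra.
have := ball_sub y y_in_ball.
by rewrite dotvBr dotvZr -sqr_enorm a1 expr1n mulr1; lra.
Qed.

End EuclideanSpace.

Section CuttingPlanes.
Variables (R : realType) (n p : nat) (k : 'I_p -> 'I_n -> R).
Variable xs : nat -> 'I_n -> R.

(* The box and all cuts [u_m.x <= 1] are implied by [|x| <= 1]. *)
Lemma feasP_scale l y w t :
  (forall i, w <= dotv (k i) y) -> 0 <= t -> enorm (fun j => t * y j) <= 1 ->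
  feasP k xs l (fun j => t * y j) (t * w).
Proof.
move=> cone t_ge0 ty_le1; split; [|split].
- by move=> i; rewrite dotvZr ler_wpM2l.
- by move=> j; rewrite -ler_norml; exact: le_trans (norm_coord_le_enorm _ j) ty_le1.
- by move=> m _; exact: le_trans (dotv_unitdir_le_enorm _ _) ty_le1.
Qed.

Lemma optP_value_gt0 l x z :
  (forall i, enorm (k i) = 1) ->
  (exists x0 e, 0 < e /\ forall y, enorm (fun j => y j - x0 j) < e ->
     forall i, 0 <= dotv (k i) y) ->
  optP k xs l x z -> 0 < z.
Proof.
move=> k_unit [x0 [e [e_gt0 ball_sub]]] [_ z_max].
have cone i : e / 2 <= dotv (k i) x0.
  by apply: interior_halfspace_dotv => // y /ball_sub.
set c := (1 + enorm x0)^-1.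
have x0_ge0 := enorm_ge0 x0.
have c_gt0 : 0 < c by rewrite invr_gt0; lra.
have cx0_le1 : enorm (fun j => c * x0 j) <= 1.
  by rewrite enormZ gtr0_norm // /c mulrC ler_pdivrMr; lra.
have := z_max _ _ (feasP_scale l cone (ltW c_gt0) cx0_le1).
have : 0 < c * (e / 2) by rewrite mulr_gt0 //; lra.
lra.
Qed.

(* Stretching by [t = 2 / (1 + |x|)] keeps [(t x, t z)] feasible when [|x| < 1]. *)
Lemma optP_enorm_ge1 l x z : 0 < z -> optP k xs l x z -> 1 <= enorm x.
Proof.
move=> z_gt0 [[cone _] z_max]; rewrite leNgt; apply/negP => x_lt1.
have x_ge0 := enorm_ge0 x.
set t := 2 / (1 + enorm x).
have t_gt1 : 1 < t by rewrite /t ltr_pdivlMr; lra.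
have t_def : t * (1 + enorm x) = 2 by rewrite /t mulfVK //; lra.
have tx_le1 : enorm (fun j => t * x j) <= 1.
  by rewrite enormZ gtr0_norm; nra.
have := z_max _ _ (feasP_scale l cone (ltW (lt_trans ltr01 t_gt1)) tx_le1).
nra.
Qed.

End CuttingPlanes.

Theorem lemma1 (R : realType) (n p : nat) (k : 'I_p -> 'I_n -> R)
  (* each k_i has unit Euclidean length *)
  (hk : forall i : 'I_p, enorm (k i) = 1)
  (* the cone K = {x | k_i^T x >= 0 for all i} has non-empty interior *)
  (hint : exists (x0 : 'I_n -> R) (e : R), 0 < e /\
     forall y : 'I_n -> R, enorm (fun j => y j - x0 j) < e ->
       forall i : 'I_p, 0 <= dotv (k i) y)
  (* (xs l, zs l) is an (arbitrary) optimal solution of P_l for every l *)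
  (xs : nat -> 'I_n -> R) (zs : nat -> R)
  (hopt : forall l : nat, optP k xs l (xs l) (zs l)) :
  forall (l : nat) (r : R),
    0 <= r -> r < enorm (fun j => xs l j - unitdir (xs l) j) ->
    ~ (exists (x : 'I_n -> R) (z : R),
         feasP k xs l.+1 x z /\ enorm (fun j => xs l j - x j) <= r).
Proof.
move=> l r _ r_lt [x [z [[_ [_ cuts]] dist_le_r]]].
have xl_ge1 := optP_enorm_ge1 (optP_value_gt0 hk hint (hopt l)) (hopt l).
have := enorm_sub_ge_cut xl_ge1 (cuts l (ltnSn l)).
by rewrite enorm_sub_unitdir // in r_lt; lra.
Qed.
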